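(* Let $\mathcal U$ be a finite nonempty set, let $\epsilon_1,\epsilon_2\in(0,1]$ and let $F_a,F_b\ge1$ be integers. For $p\in[\max\{\epsilon_1,\epsilon_2\},1]$ and nonnegative integer vectors $a=(a_v)_{v\in\mathcal U}$, $b=(b_v)_{v\in\mathcal U}$, let $$V(p;a,b)=\Big(\frac1p-1\Big)\gamma_{2,2}+\Big(\frac1{\epsilon_2}-\frac1p\Big)\gamma_{2,1}+\Big(\frac1{\epsilon_1}-\frac1p\Big)\gamma_{1,2}+\Big(\frac{p}{\epsilon_1\epsilon_2}-\frac1{\epsilon_1}-\frac1{\epsilon_2}+\frac1p\Big)\gamma_{1,1},\quad \gamma_{i,j}=\sum_v a_v^ib_v^j,$$ which is the variance of the COUNT join estimator under UBS parameters $(p,\epsilon_1/p)$ and $(p,\epsilon_2/p)$. Then the value of $p\in[\max\{\epsilon_1,\epsilon_2\},1]$ minimizing the worst-case variance $\max\{V(p;a,b): 0\le a_v\le F_a,\ 0\le b_v\le F_b \text{ for all } v\}$ is $$p=\min\Big\{1,\max\Big\{\epsilon_1,\epsilon_2,\sqrt{\epsilon_1\epsilon_2(F_aF_b-F_a-F_b+1)}\Big\}\Big\},$$ with corresponding uniform sampling rates $q_1=\epsilon_1/p$, $q_2=\epsilon_2/p$.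
   Context: Setting: two tables $T_1,T_2$ joined on a column $J$ with values in $\mathcal U$ are held by different parties; $a_v$, $b_v$ are the numbers of tuples of $T_1$, $T_2$ with $J$-value $v$, and the only information about the frequency vectors used is the maximum frequencies $F_a=\max_v a_v$ and $F_b=\max_v b_v$. Both tables use universe-Bernoulli sampling with the same universe rate $p$ (each tuple whose hashed join value is below $p$ is kept independently with probability $q_i$), with effective sampling rates $pq_i=\epsilon_i$; the COUNT estimator is $|S_1\bowtie S_2|/(pq_1q_2)$, whose variance equals $V(p;a,b)$ above. *)

(* R is an arbitrary real closed field (rcfType), which
   covers the reals; all quantities are algebraic. *)
From HB Require Import structures.
From mathcomp Require Import all_boot all_order all_algebra.
Set Implicit Arguments. Unset Strict Implicit. Unset Printing Implicit Defensive.
Import Order.TTheory GRing.Theory Num.Theory.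
Local Open Scope ring_scope.

Definition gamma (R : rcfType) (U : finType) (i j : nat) (a b : U -> nat) : R :=
  \sum_(v : U) (a v)%:R ^+ i * (b v)%:R ^+ j.

Definition Var (R : rcfType) (U : finType) (e1 e2 p : R) (a b : U -> nat) : R :=
    (p^-1 - 1) * gamma R 2 2 a b
  + (e2^-1 - p^-1) * gamma R 2 1 a b
  + (e1^-1 - p^-1) * gamma R 1 2 a b
  + (p / (e1 * e2) - e1^-1 - e2^-1 + p^-1) * gamma R 1 1 a b.

(* The fold starts from V(p;0,0),
   which is itself one of the values (a = b = 0), so this is exactly the
   maximum over the finite nonempty family. *)
Definition worst_var (R : rcfType) (U : finType) (e1 e2 : R) (Fa Fb : nat) (p : R) : R :=
  \big[Num.max/Var e1 e2 p (fun _ : U => 0%N) (fun _ : U => 0%N)]_(a : {ffun U -> 'I_Fa.+1})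
   \big[Num.max/Var e1 e2 p (fun _ : U => 0%N) (fun _ : U => 0%N)]_(b : {ffun U -> 'I_Fb.+1})
     Var e1 e2 p (fun v => nat_of_ord (a v)) (fun v => nat_of_ord (b v)).

Definition p_opt (R : rcfType) (e1 e2 : R) (Fa Fb : nat) : R :=
  Num.min 1 (Num.max (Num.max e1 e2)
    (Num.sqrt (e1 * e2 * ((Fa%:R : R) * Fb%:R - Fa%:R - Fb%:R + 1)))).

From mathcomp Require Import all_boot all_order all_algebra.
From mathcomp Require Import ring lra.
Import Order.TTheory GRing.Theory Num.Theory.
Set Implicit Arguments. Unset Strict Implicit. Unset Printing Implicit Defensive.
Local Open Scope ring_scope.

(* For p in [max e1 e2, 1] the four coefficients of V are nonnegative, so
   V(p; a, b) is a sum over v of a polynomial in (a_v, b_v) increasing in both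
   arguments; the worst case is a = Fa, b = Fb, giving #|U| f(p) with
   f(p) = A/p + B p + C.  Moreover
   f(p) - f(t) = Fa Fb (p - t)(p t - D) / (e1 e2 p t),  D = e1 e2 (Fa - 1)(Fb - 1),
   so f is minimised at sqrt D, and clamping sqrt D into [max e1 e2, 1] makes
   (p - t)(p t - D) positive for every other admissible p. *)

Section VarTerm.

Variable R : rcfType.

Definition var_term (e1 e2 p x y : R) : R :=
  (p^-1 - 1) * (x ^+ 2 * y ^+ 2) + (e2^-1 - p^-1) * (x ^+ 2 * y)
  + (e1^-1 - p^-1) * (x * y ^+ 2) + (p / (e1 * e2) - e1^-1 - e2^-1 + p^-1) * (x * y).

Lemma Var_sum_var_term (U : finType) (e1 e2 p : R) (a b : U -> nat) :
  Var e1 e2 p a b = \sum_v var_term e1 e2 p (a v)%:R (b v)%:R.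
Proof.
rewrite /Var /gamma !mulr_sumr -!big_split /=.
by apply: eq_bigr => v _; rewrite /var_term; ring.
Qed.

Lemma ler_pXnM (x y X Y : R) (i j : nat) :
  0 <= x -> x <= X -> 0 <= y -> y <= Y -> x ^+ i * y ^+ j <= X ^+ i * Y ^+ j.
Proof.
move=> x0 xX y0 yY; rewrite ler_pM ?exprn_ge0 //.
  by rewrite lerXn2r // ?nnegrE // (le_trans x0).
by rewrite lerXn2r // ?nnegrE // (le_trans y0).
Qed.

Lemma var_term_le (e1 e2 p x y X Y : R) :
  0 < e1 -> 0 < e2 -> Num.max e1 e2 <= p -> p <= 1 ->
  0 <= x -> x <= X -> 0 <= y -> y <= Y ->
  var_term e1 e2 p x y <= var_term e1 e2 p X Y.
Proof.
move=> e1_gt0 e2_gt0; rewrite ge_max => /andP[e1p e2p] p_le1 x0 xX y0 yY.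
have p_gt0 : 0 < p by apply: lt_le_trans e1p.
have c22 : 0 <= p^-1 - 1 by rewrite subr_ge0 invr_ge1 // ?unitfE ?gt_eqF.
have c21 : 0 <= e2^-1 - p^-1 by rewrite subr_ge0 lef_pV2.
have c12 : 0 <= e1^-1 - p^-1 by rewrite subr_ge0 lef_pV2.
have c11 : 0 <= p / (e1 * e2) - e1^-1 - e2^-1 + p^-1.
  have -> : p / (e1 * e2) - e1^-1 - e2^-1 + p^-1 = (p - e1) * (p - e2) / (p * e1 * e2).
    by field; rewrite !gt_eqF.
  by rewrite divr_ge0 ?mulr_ge0 ?subr_ge0 // ?ltW.
rewrite /var_term -[x]expr1 -[X]expr1 -[y]expr1 -[Y]expr1.
by rewrite !lerD // ler_wpM2l // ler_pXnM.
Qed.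

Lemma var_term_subr (e1 e2 p t X Y : R) :
  e1 != 0 -> e2 != 0 -> p != 0 -> t != 0 ->
  var_term e1 e2 p X Y - var_term e1 e2 t X Y =
  X * Y * ((p - t) * (p * t - e1 * e2 * (X * Y - X - Y + 1))) / (e1 * e2 * p * t).
Proof. by move=> *; rewrite /var_term; field; apply/and4P. Qed.

End VarTerm.

Lemma worst_var_var_term (R : rcfType) (U : finType) (e1 e2 : R) (Fa Fb : nat) (p : R) :
  0 < e1 -> 0 < e2 -> Num.max e1 e2 <= p -> p <= 1 ->
  worst_var U e1 e2 Fa Fb p = var_term e1 e2 p Fa%:R Fb%:R *+ #|U|.
Proof.
move=> e1_gt0 e2_gt0 e_le_p p_le1; rewrite -sumr_const.
have Var_le (a b : U -> nat) : (forall v, a v <= Fa)%N -> (forall v, b v <= Fb)%N ->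
    Var e1 e2 p a b <= \sum_(v : U) var_term e1 e2 p Fa%:R Fb%:R.
  move=> aFa bFb; rewrite Var_sum_var_term; apply: ler_sum => v _.
  by apply: var_term_le; rewrite ?ler0n ?ler_nat.
apply/eqP; rewrite eq_le; apply/andP; split.
  apply: bigmax_le => [|a _]; first exact: Var_le.
  apply: bigmax_le => [|b _]; first exact: Var_le.
  by apply: Var_le => v; rewrite -ltnS.
apply: le_trans (le_bigmax _ _ [ffun _ => ord_max]).
apply: le_trans (le_bigmax _ _ [ffun _ => ord_max]).
by rewrite Var_sum_var_term; apply: ler_sum => v _; rewrite !ffunE.
Qed.

Section ClampSqrt.

Variables (R : rcfType) (m D : R).
Hypotheses (m_gt0 : 0 < m) (m_le1 : m <= 1) (D_ge0 : 0 <= D).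

Let t := Num.min 1 (Num.max m (Num.sqrt D)).

Lemma lb_le_clamp_sqrt : m <= t.
Proof. by rewrite le_min m_le1 le_max lexx. Qed.

Lemma clamp_sqrt_le1 : t <= 1.
Proof. by rewrite ge_min lexx. Qed.

Lemma sqrt_le_clamp : t < 1 -> Num.sqrt D <= t.
Proof.
rewrite /t gt_min ltxx /= => M_lt1.
rewrite le_min le_max lexx orbT andbT (le_trans _ (ltW M_lt1)) //.
by rewrite le_max lexx orbT.
Qed.

Lemma clamp_le_sqrt : m < t -> t <= Num.sqrt D.
Proof.
rewrite /t lt_min lt_max ltxx /= => /andP[_ m_lt_s].
by rewrite ge_min ge_max lexx (ltW m_lt_s) orbT.
Qed.

Lemma clamp_sqrt_sign (p : R) :
  m <= p -> p <= 1 -> p != t -> 0 < (p - t) * (p * t - D).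
Proof.
move=> m_le_p p_le1 p_neq_t.
have p_gt0 : 0 < p := lt_le_trans m_gt0 m_le_p.
have t_gt0 : 0 < t := lt_le_trans m_gt0 lb_le_clamp_sqrt.
have sqrtD2 : Num.sqrt D * Num.sqrt D = D by rewrite -expr2 sqr_sqrtr.
have [p_lt_t | t_lt_p | p_eq_t] := ltgtP p t; last by rewrite p_eq_t eqxx in p_neq_t.
- have ts := clamp_le_sqrt (le_lt_trans m_le_p p_lt_t).
  have : p * t < Num.sqrt D * t by rewrite ltr_pM2r // (lt_le_trans p_lt_t).
  have : Num.sqrt D * t <= D by rewrite -{2}sqrtD2 ler_wpM2l ?sqrtr_ge0.
  by move=> *; rewrite -mulrNN; apply: mulr_gt0; lra.
- have st := sqrt_le_clamp (lt_le_trans t_lt_p p_le1).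
  have : D <= t * t by rewrite -sqrtD2 ler_pM ?sqrtr_ge0.
  have : t * t < p * t by rewrite ltr_pM2r.
  by move=> *; apply: mulr_gt0; lra.
Qed.

End ClampSqrt.

Section Optimum.

Variables (R : rcfType) (U : finType) (e1 e2 : R) (Fa Fb : nat).
Hypotheses (U_gt0 : (0 < #|U|)%N) (e1_gt0 : 0 < e1) (e1_le1 : e1 <= 1)
  (e2_gt0 : 0 < e2) (e2_le1 : e2 <= 1) (Fa_ge1 : (1 <= Fa)%N) (Fb_ge1 : (1 <= Fb)%N).

Let m_gt0 : 0 < Num.max e1 e2. Proof. by rewrite lt_max e1_gt0. Qed.
Let m_le1 : Num.max e1 e2 <= 1. Proof. by rewrite ge_max e1_le1 e2_le1. Qed.

Let radicand_ge0 : 0 <= e1 * e2 * ((Fa%:R : R) * Fb%:R - Fa%:R - Fb%:R + 1).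
Proof.
have -> : (Fa%:R : R) * Fb%:R - Fa%:R - Fb%:R + 1 = (Fa%:R - 1) * (Fb%:R - 1) by ring.
by rewrite !mulr_ge0 ?subr_ge0 ?ler1n // ltW.
Qed.

Lemma lb_le_p_opt : Num.max e1 e2 <= p_opt e1 e2 Fa Fb.
Proof. exact: lb_le_clamp_sqrt. Qed.

Lemma p_opt_le1 : p_opt e1 e2 Fa Fb <= 1.
Proof. exact: clamp_sqrt_le1. Qed.

Lemma worst_var_p_opt_lt (p : R) :
  Num.max e1 e2 <= p -> p <= 1 -> p != p_opt e1 e2 Fa Fb ->
  worst_var U e1 e2 Fa Fb (p_opt e1 e2 Fa Fb) < worst_var U e1 e2 Fa Fb p.
Proof.
move=> m_le_p p_le1 p_neq.
have p_gt0 : 0 < p := lt_le_trans m_gt0 m_le_p.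
have pstar_gt0 : 0 < p_opt e1 e2 Fa Fb := lt_le_trans m_gt0 lb_le_p_opt.
rewrite !worst_var_var_term ?lb_le_p_opt ?p_opt_le1 //.
rewrite -subr_gt0 -mulrnBl pmulrn_lgt0 // var_term_subr ?gt_eqF //.
apply: divr_gt0; last by rewrite !mulr_gt0.
apply: mulr_gt0; first by rewrite mulr_gt0 ?ltr0n.
exact: clamp_sqrt_sign.
Qed.

End Optimum.

Theorem theorem6 (R : rcfType) (U : finType) (e1 e2 : R) (Fa Fb : nat) :
  (0 < #|U|)%N ->
  0 < e1 -> e1 <= 1 -> 0 < e2 -> e2 <= 1 ->
  (1 <= Fa)%N -> (1 <= Fb)%N ->
  let pstar := p_opt e1 e2 Fa Fb in
  [/\ Num.max e1 e2 <= pstar, pstar <= 1,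
      (forall p : R, Num.max e1 e2 <= p -> p <= 1 ->
         worst_var U e1 e2 Fa Fb pstar <= worst_var U e1 e2 Fa Fb p)
    & (forall p : R, Num.max e1 e2 <= p -> p <= 1 ->
         worst_var U e1 e2 Fa Fb p <= worst_var U e1 e2 Fa Fb pstar -> p = pstar)].
Proof.
move=> U_gt0 e1_gt0 e1_le1 e2_gt0 e2_le1 Fa_ge1 Fb_ge1 pstar.
have worst_var_lt := worst_var_p_opt_lt U_gt0 e1_gt0 e1_le1 e2_gt0 e2_le1 Fa_ge1 Fb_ge1.
split => [||p m_le_p p_le1|p m_le_p p_le1].
- exact: lb_le_p_opt.
- exact: p_opt_le1.
- by have [->|/(worst_var_lt p m_le_p p_le1)/ltW] := eqVneq p pstar.
- move=> worst_le; apply/eqP; apply: contraTT worst_le => p_neq.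
  by rewrite -ltNge worst_var_lt.
Qed.
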